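(* Let $(U,\Phi)$ be a complete two-phase quantum walk with an initial state $\Phi\in\mathcal H_0$. Then $(U,\Phi)$ is unitary equivalent to $(U_{r,\sigma},\Phi_{\alpha,\theta})$ for some $0\le r_\varepsilon,\alpha\le1$ ($\varepsilon=+,-$) and $\sigma_i,\theta\in\mathbb R$ ($i=1,2$), where $\Phi_{\alpha,\theta}=\alpha e_1^0+e^{i\theta}\sqrt{1-\alpha^2}\,e_2^0$ and \begin{align*} U_{r,\sigma}={}&\sum_{n\ge0}|e_1^{n-1}\rangle\langle r_+e_1^n+s_+e_2^n|+|e_2^{n+1}\rangle\langle -e^{i\sigma_1}s_+e_1^n+e^{i\sigma_1}r_+e_2^n|\\ &+\sum_{n\le-1}|e_1^{n-1}\rangle\langle r_-e_1^n+e^{i\sigma_2}s_-e_2^n|+|e_2^{n+1}\rangle\langle -s_-e_1^n+e^{i\sigma_2}r_-e_2^n|, \end{align*} with $s_\varepsilon=\sqrt{1-r_\varepsilon^2}$, $r=(r_+,r_-)$, $\sigma=(\sigma_1,\sigma_2)$. Moreover, for $0<r_\varepsilon,r'_\varepsilon,\alpha,\alpha'<1$ and $\sigma_i,\sigma'_i,\theta,\theta'\in[0,2\pi)$, $(U_{r,\sigma},\Phi_{\alpha,\theta})$ and $(U_{r',\sigma'},\Phi_{\alpha',\theta'})$ are unitary equivalent if and only if $r=r'$, $\sigma=\sigma'$, $\alpha=\alpha'$ and $\theta=\theta'$.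
   Context: Let $\mathcal H_n=\mathbb C^2$ for $n\in\mathbb Z$, $\mathcal H=\bigoplus_{n\in\mathbb Z}\mathcal H_n$, $P_n$ the orthogonal projection onto $\mathcal H_n$, and $\{e_1^n,e_2^n\}$ the standard basis of $\mathcal H_n$; each $\mathcal H_n$ is identified with $\mathbb C^2$. Dirac notation: $|x\rangle\langle y|$ is the operator $z\mapsto\langle y,z\rangle x$ (inner product conjugate-linear in the first argument). A one-dimensional quantum walk is a unitary $U$ on $\mathcal H$ with $\operatorname{rank}(P_nUP_m)=1$ if $m=n\pm1$ and $0$ otherwise. Every such $U$ can be written as $U=\sum_{n\in\mathbb Z}|\xi_{n-1,n}\rangle\langle\zeta_{n-1,n}|+|\xi_{n+1,n}\rangle\langle\zeta_{n+1,n}|$, where $\{\xi_{n,n+1},\xi_{n+1,n}\}_{n}$ and $\{\zeta_{n,n+1},\zeta_{n+1,n}\}_{n}$ are orthonormal bases of $\mathcal H$ with $\xi_{n,n+1},\zeta_{n+1,n}\in\mathcal H_n$ and $\xi_{n+1,n},\zeta_{n,n+1}\in\mathcal H_{n+1}$. $U$ is a complete two-phase quantum walk if it has such a representation for which there exist $\xi_1^\pm,\xi_2^\pm,\zeta_1^\pm,\zeta_2^\pm\in\mathbb C^2$ with $\xi_{n,n+1}=\xi_1^+$, $\xi_{n,n-1}=\xi_2^+$, $\zeta_{n-1,n}=\zeta_1^+$, $\zeta_{n+1,n}=\zeta_2^+$ for all $n\ge0$, and the same with superscript $-$ for all $n\le-1$. An initial state is a unit vector $\Phi\in\mathcal H_0$.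 Since a walk $U$ is identified with $e^{i\lambda}U$ and a state $\Phi$ with $e^{i\lambda}\Phi$, pairs $(U,\Phi)$ and $(U',\Phi')$ are called unitary equivalent if there exist $\lambda,\lambda'\in\mathbb R$ and a unitary $W=\bigoplus_nW_n$ ($W_n$ unitary on $\mathcal H_n$) with $e^{i\lambda}WUW^*=U'$ and $e^{i\lambda'}W\Phi=\Phi'$. *)

From HB Require Import structures.
From mathcomp Require Import all_boot all_order all_algebra.
From mathcomp Require Import complex.
From mathcomp Require Import Rstruct.
From Stdlib Require Import Reals.
Set Implicit Arguments. Unset Strict Implicit. Unset Printing Implicit Defensive.
Import Order.TTheory GRing.Theory Num.Theory.

Local Open Scope ring_scope.
Local Open Scope complex_scope.

Definition C : Type := (Rdefinitions.R)[i].
Definition RtoC (x : Rdefinitions.R) : C := x%:C.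
Definition expi (t : Rdefinitions.R) : C := (Rtrigo_def.cos t) +i* (Rtrigo_def.sin t).

(* H_n = C^2, vectors as column vectors *)
Definition vec := 'cV[C]_2.
Definition e1 : vec := \col_(i < 2) (if i == ord0 then 1 else 0).
Definition e2 : vec := \col_(i < 2) (if i == ord0 then 0 else 1).

Definition inner (x y : vec) : C := \sum_(i < 2) (x i ord0)^* * y i ord0.
Definition adjm (m n : nat) (A : 'M[C]_(m, n)) : 'M[C]_(n, m) := (map_mx conjc A)^T.
Definition ketbra (x y : vec) : 'M[C]_2 := x *m adjm y.

Definition orthonormal2 (x y : vec) : Prop :=
  inner x x = 1 /\ inner y y = 1 /\ inner x y = 0.

(* An operator on H = (+)_{n in Z} H_n, represented by its block kernel:
   U n m = P_n U P_m viewed as a 2x2 matrix H_m -> H_n in the standard bases. *)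
Definition kernel := int -> int -> 'M[C]_2.

Definition banded_walk (U : kernel) : Prop :=
  forall n m : int, \rank (U n m) = (if (m == n + 1) || (m == n - 1) then 1 else 0)%N.

Definition window_sum (n : int) (F : int -> 'M[C]_2) : 'M[C]_2 :=
  \sum_(i < 3) F (n - 1 + (nat_of_ord i)%:Z).

(* For a kernel with the band structure above, U^*U = 1 and UU^* = 1
   (the sums over k defining the products reduce to k = n-1, n+1). *)
Definition unitary_banded (U : kernel) : Prop :=
  forall n m : int,
    window_sum n (fun k => adjm (U k n) *m U k m) = (if n == m then 1%:M else 0)
 /\ window_sum n (fun k => U n k *m adjm (U m k)) = (if n == m then 1%:M else 0).

Definition quantum_walk (U : kernel) : Prop := banded_walk U /\ unitary_banded U.

Definition pick (n : int) (p q : vec) : vec := if 0 <= n then p else q.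

(* the kernel of  sum_n |xi_{n-1,n}><zeta_{n-1,n}| + |xi_{n+1,n}><zeta_{n+1,n}|
   with xi_{n,n+1} = xi1^+, xi_{n,n-1} = xi2^+, zeta_{n-1,n} = zeta1^+,
   zeta_{n+1,n} = zeta2^+ for n >= 0, and superscript - for n <= -1. *)
Definition two_phase_kernel (xi1p xi2p xi1m xi2m ze1p ze2p ze1m ze2m : vec) : kernel :=
  fun n m =>
    (if n == m - 1 then ketbra (pick n xi1p xi1m) (pick m ze1p ze1m) else 0)
  + (if n == m + 1 then ketbra (pick n xi2p xi2m) (pick m ze2p ze2m) else 0).

Definition complete_two_phase (U : kernel) : Prop :=
  quantum_walk U /\
  exists xi1p xi2p xi1m xi2m ze1p ze2p ze1m ze2m : vec,
    orthonormal2 xi1p xi2p /\ orthonormal2 xi1m xi2m /\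
    orthonormal2 ze1p ze2p /\ orthonormal2 ze1m ze2m /\
    (forall n m, U n m = two_phase_kernel xi1p xi2p xi1m xi2m ze1p ze2p ze1m ze2m n m).

(* initial state: unit vector of H_0 *)
Definition initial_state (Phi : vec) : Prop := inner Phi Phi = 1.

Definition unitary_equiv (U : kernel) (Phi : vec) (U' : kernel) (Phi' : vec) : Prop :=
  exists (l l' : Rdefinitions.R) (W : int -> 'M[C]_2),
    (forall n, adjm (W n) *m W n = 1%:M /\ W n *m adjm (W n) = 1%:M) /\
    (forall n m, expi l *: (W n *m U n m *m adjm (W m)) = U' n m) /\
    expi l' *: (W 0 *m Phi) = Phi'.

Definition sqrt1m (r : Rdefinitions.R) : Rdefinitions.R := R_sqrt.sqrt (1 - r * r)%R.

Definition Uzeta1 (rp rm s2 : Rdefinitions.R) (m : int) : vec :=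
  if 0 <= m then RtoC rp *: e1 + RtoC (sqrt1m rp) *: e2
  else RtoC rm *: e1 + (expi s2 * RtoC (sqrt1m rm)) *: e2.
Definition Uzeta2 (rp rm s1 s2 : Rdefinitions.R) (m : int) : vec :=
  if 0 <= m then (- (expi s1 * RtoC (sqrt1m rp))) *: e1 + (expi s1 * RtoC rp) *: e2
  else (- RtoC (sqrt1m rm)) *: e1 + (expi s2 * RtoC rm) *: e2.
Definition U_rs (rp rm s1 s2 : Rdefinitions.R) : kernel :=
  fun n m =>
    (if n == m - 1 then ketbra e1 (Uzeta1 rp rm s2 m) else 0)
  + (if n == m + 1 then ketbra e2 (Uzeta2 rp rm s1 s2 m) else 0).

Definition Phi_at (a t : Rdefinitions.R) : vec :=
  RtoC a *: e1 + (expi t * RtoC (sqrt1m a)) *: e2.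

(* On each half-line the overlaps <xi_i, zeta_j> of the two orthonormal bases
   form a 2x2 unitary, which can be written [[r P, -k s Q^-1], [s Q, k r P^-1]] with
   0 <= r <= 1, s = sqrt (1 - r^2) and unimodular P, Q, k.  Conjugating by the site-wise
   unitary W_n = diag (a_n, b_n) F_n, where F_n maps the local basis xi_1(n), xi_2(n) to
   e_1, e_2, and multiplying by a global phase rho, turns the walk into U_{r,sigma}: matching
   the blocks forces a_n to be a two-sided geometric sequence and b_n = rho a_(n-1) / Q_+,
   and the phases that cannot be gauged away are sigma_1, sigma_2.  A last global phase puts
   the initial state in the form Phi_{alpha,theta}.
   Conversely, a gauge equivalence between two walks U_{r,sigma} maps the range e_1 (resp.
   e_2) of each block onto itself, hence is diagonal at every site; comparing moduli and
   phases of the blocks around the origin then forces equal parameters. *)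

From Pilot Require Import Defs.
From HB Require Import structures.
From mathcomp Require Import all_boot all_order all_algebra.
From mathcomp Require Import complex.
From mathcomp Require Import Rstruct.
From Stdlib Require Import Reals.
From Stdlib Require Import Lra Lia.
From mathcomp Require Import ring zify.
Set Implicit Arguments. Unset Strict Implicit. Unset Printing Implicit Defensive.
Import Order.TTheory GRing.Theory Num.Theory.
Local Open Scope ring_scope.
Local Notation C := Defs.C.

Lemma ord2P (i : 'I_2) : i = ord0 \/ i = ord_max.
Proof. by case: i => [[|[|k]] lt_k2]; [left; apply: val_inj|right; apply: val_inj|]. Qed.

Lemma big_ord2 (F : 'I_2 -> C) : \sum_(i < 2) F i = F ord0 + F ord_max.
Proof. by rewrite !big_ord_recl big_ord0 addr0; congr (_ + F _); apply: val_inj. Qed.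

Lemma vec2P (x y : vec) :
  x ord0 ord0 = y ord0 ord0 -> x ord_max ord0 = y ord_max ord0 -> x = y.
Proof. by move=> x0 x1; apply/matrixP => i j; rewrite (ord1 j); case: (ord2P i) => ->. Qed.

Lemma mx2P (A B : 'M[C]_2) :
  A ord0 ord0 = B ord0 ord0 -> A ord0 ord_max = B ord0 ord_max ->
  A ord_max ord0 = B ord_max ord0 -> A ord_max ord_max = B ord_max ord_max -> A = B.
Proof.
move=> A00 A01 A10 A11; apply/matrixP => i j.
by case: (ord2P i) => ->; case: (ord2P j) => ->.
Qed.

Lemma mulmx2E m p (A : 'M[C]_(m, 2)) (B : 'M[C]_(2, p)) i j :
  (A *m B) i j = A i ord0 * B ord0 j + A i ord_max * B ord_max j.
Proof. by rewrite mxE big_ord2. Qed.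

Lemma e1_coord0 : e1 ord0 ord0 = 1. Proof. by rewrite mxE. Qed.
Lemma e1_coord1 : e1 ord_max ord0 = 0. Proof. by rewrite mxE. Qed.
Lemma e2_coord0 : e2 ord0 ord0 = 0. Proof. by rewrite mxE. Qed.
Lemma e2_coord1 : e2 ord_max ord0 = 1. Proof. by rewrite mxE. Qed.

Lemma comb_coord0 (c d : C) : (c *: e1 + d *: e2) ord0 ord0 = c.
Proof. by rewrite !mxE /= mulr1 mulr0 addr0. Qed.

Lemma comb_coord1 (c d : C) : (c *: e1 + d *: e2) ord_max ord0 = d.
Proof. by rewrite !mxE /= mulr1 mulr0 add0r. Qed.

Lemma combP (c d c' d' : C) :
  c *: e1 + d *: e2 = c' *: e1 + d' *: e2 -> c = c' /\ d = d'.
Proof.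
move=> eq_cd; split.
- by rewrite -(comb_coord0 c d) eq_cd comb_coord0.
- by rewrite -(comb_coord1 c d) eq_cd comb_coord1.
Qed.

Lemma scale_comb (k c d : C) : k *: (c *: e1 + d *: e2) = (k * c) *: e1 + (k * d) *: e2.
Proof. by rewrite scalerDr !scalerA. Qed.

Lemma vec_comb (x : vec) : x = x ord0 ord0 *: e1 + x ord_max ord0 *: e2.
Proof. by apply: vec2P; rewrite ?comb_coord0 ?comb_coord1. Qed.

Lemma mulmx_e1 (A : 'M[C]_2) : A *m e1 = A ord0 ord0 *: e1 + A ord_max ord0 *: e2.
Proof. by apply: vec2P; rewrite ?comb_coord0 ?comb_coord1 mulmx2E !mxE /= mulr1 mulr0 addr0. Qed.

Lemma mulmx_e2 (A : 'M[C]_2) : A *m e2 = A ord0 ord_max *: e1 + A ord_max ord_max *: e2.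
Proof. by apply: vec2P; rewrite ?comb_coord0 ?comb_coord1 mulmx2E !mxE /= mulr1 mulr0 add0r. Qed.

Lemma mulmx_diag_comb (A : 'M[C]_2) (c d : C) :
  A *m e1 = A ord0 ord0 *: e1 -> A *m e2 = A ord_max ord_max *: e2 ->
  A *m (c *: e1 + d *: e2) = (A ord0 ord0 * c) *: e1 + (A ord_max ord_max * d) *: e2.
Proof. by move=> Ae1 Ae2; rewrite mulmxDr -!scalemxAr Ae1 Ae2 !scalerA [c * _]mulrC [d * _]mulrC. Qed.

Lemma mulmx_diag_combP (c u v u' v' : C) (A : 'M[C]_2) :
  A *m e1 = A ord0 ord0 *: e1 -> A *m e2 = A ord_max ord_max *: e2 ->
  c *: (A *m (u *: e1 + v *: e2)) = u' *: e1 + v' *: e2 ->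
  c * A ord0 ord0 * u = u' /\ c * A ord_max ord_max * v = v'.
Proof. by move=> Ae1 Ae2; rewrite mulmx_diag_comb // scale_comb !mulrA => /combP. Qed.

Lemma mulmx_e1_parallel (rho c : C) (A : 'M[C]_2) :
  rho != 0 -> rho *: (A *m e1) = c *: e1 -> A *m e1 = A ord0 ord0 *: e1.
Proof.
move=> rho0; rewrite mulmx_e1 scale_comb (_ : c *: e1 = c *: e1 + 0 *: e2).
  by move=> /combP [_ /eqP]; rewrite mulf_eq0 (negbTE rho0) => /eqP ->; rewrite scale0r addr0.
by rewrite scale0r addr0.
Qed.

Lemma mulmx_e2_parallel (rho c : C) (A : 'M[C]_2) :
  rho != 0 -> rho *: (A *m e2) = c *: e2 -> A *m e2 = A ord_max ord_max *: e2.
Proof.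
move=> rho0; rewrite mulmx_e2 scale_comb (_ : c *: e2 = 0 *: e1 + c *: e2).
  by move=> /combP [/eqP + _]; rewrite mulf_eq0 (negbTE rho0) => /eqP ->; rewrite scale0r add0r.
by rewrite scale0r add0r.
Qed.

Lemma adjmE m n (A : 'M[C]_(m, n)) i j : adjm A i j = (A j i)^*.
Proof. by rewrite /adjm !mxE. Qed.

Lemma adjmM m n p (A : 'M[C]_(m, n)) (B : 'M[C]_(n, p)) :
  adjm (A *m B) = adjm B *m adjm A.
Proof. by rewrite /adjm map_mxM trmx_mul. Qed.

Lemma adjmK m n (A : 'M[C]_(m, n)) : adjm (adjm A) = A.
Proof. by apply/matrixP => i j; rewrite !adjmE conjCK. Qed.

Lemma adjm1 : adjm (1%:M : 'M[C]_2) = 1%:M.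
Proof. by apply/matrixP => i j; rewrite adjmE !mxE eq_sym rmorph_nat. Qed.

Lemma innerE (x y : vec) :
  inner x y = (x ord0 ord0)^* * y ord0 ord0 + (x ord_max ord0)^* * y ord_max ord0.
Proof. by rewrite /inner big_ord2. Qed.

Lemma inner_adjm (x y : vec) : inner x y = (adjm x *m y) ord0 ord0.
Proof. by rewrite innerE mulmx2E !adjmE. Qed.

Lemma innerC (x y : vec) : inner y x = (inner x y)^*.
Proof. by rewrite !innerE rmorphD !rmorphM /= !conjCK mulrC [X in _ + X]mulrC. Qed.

Lemma innerZ (c d : C) (x y : vec) : inner (c *: x) (d *: y) = c^* * d * inner x y.
Proof. by rewrite !innerE !mxE !rmorphM /=; ring. Qed.

Lemma inner_e1l (v : vec) : inner e1 v = v ord0 ord0.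
Proof. by rewrite innerE e1_coord0 e1_coord1 conjC1 conjC0 mul1r mul0r addr0. Qed.

Lemma inner_e2l (v : vec) : inner e2 v = v ord_max ord0.
Proof. by rewrite innerE e2_coord0 e2_coord1 conjC1 conjC0 mul1r mul0r add0r. Qed.

Lemma orthonormal_e12 : orthonormal2 e1 e2.
Proof. by rewrite /orthonormal2 !inner_e1l !inner_e2l e1_coord0 e2_coord1 e2_coord0. Qed.

Lemma inner_comb (c d c' d' : C) :
  inner (c *: e1 + d *: e2) (c' *: e1 + d' *: e2) = c^* * c' + d^* * d'.
Proof. by rewrite innerE !comb_coord0 !comb_coord1. Qed.

Lemma inner_isometry (A : 'M[C]_2) (x y : vec) :
  adjm A *m A = 1%:M -> inner (A *m x) (A *m y) = inner x y.
Proof. by move=> AA; rewrite !inner_adjm adjmM -mulmxA (mulmxA (adjm A)) AA mul1mx. Qed.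

Lemma ketbraE (x y : vec) i j : ketbra x y i j = x i ord0 * (y j ord0)^*.
Proof. by rewrite /ketbra mxE big_ord1 adjmE. Qed.

Lemma ketbra_apply (x y w : vec) : ketbra x y *m w = inner y w *: x.
Proof. by rewrite /ketbra -mulmxA [adjm y *m w]mx11_scalar mul_mx_scalar -inner_adjm. Qed.

Lemma adjm_ketbra (x y : vec) : adjm (ketbra x y) = ketbra y x.
Proof. by rewrite /ketbra adjmM adjmK. Qed.

Lemma ketbra_conj (V1 V2 : 'M[C]_2) (x y : vec) :
  V1 *m ketbra x y *m adjm V2 = ketbra (V1 *m x) (V2 *m y).
Proof. by rewrite /ketbra adjmM !mulmxA. Qed.

Lemma ketbraZl (c : C) (x y : vec) : ketbra (c *: x) y = ketbra x (c^* *: y).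
Proof. by apply/matrixP => i j; rewrite !ketbraE !mxE rmorphM /= conjCK mulrCA mulrA. Qed.

Lemma scale_ketbra (c : C) (x y : vec) : c *: ketbra x y = ketbra (c *: x) y.
Proof. by rewrite /ketbra scalemxAl. Qed.

Lemma ketbra_inj (x y z : vec) : inner x x = 1 -> ketbra x y = ketbra x z -> y = z.
Proof.
move=> xx eq_yz.
have /(congr1 (mulmx^~ x)) : adjm (ketbra x y) = adjm (ketbra x z) by rewrite eq_yz.
by rewrite !adjm_ketbra !ketbra_apply xx !scale1r.
Qed.

Lemma isometry_eigenvalue_norm1 (A : 'M[C]_2) (x : vec) (c : C) :
  adjm A *m A = 1%:M -> inner x x = 1 -> A *m x = c *: x -> `|c| = 1.
Proof.
move=> AA xx Ax; apply/eqP; rewrite -(sqrp_eq1 (normr_ge0 c)) normCKC; apply/eqP.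
by rewrite -[RHS]xx -(inner_isometry x x AA) Ax innerZ xx mulr1.
Qed.

Lemma norm1_neq0 (c : C) : `|c| = 1 -> c != 0.
Proof. by move=> c1; rewrite -normr_eq0 c1 oner_eq0. Qed.

Lemma norm1_conj (c : C) : `|c| = 1 -> c^* = c^-1.
Proof. by move=> c1; rewrite invC_norm c1 expr1n invr1 mul1r. Qed.

Lemma norm1_mulCr (c : C) : `|c| = 1 -> c * c^* = 1.
Proof. by move=> c1; rewrite -normCK c1 expr1n. Qed.

Lemma norm1_mulCl (c : C) : `|c| = 1 -> c^* * c = 1.
Proof. by move=> c1; rewrite mulrC norm1_mulCr. Qed.

Lemma norm1M (c d : C) : `|c| = 1 -> `|d| = 1 -> `|c * d| = 1.
Proof. by move=> c1 d1; rewrite normrM c1 d1 mulr1. Qed.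

Lemma norm1V (c : C) : `|c| = 1 -> `|c^-1| = 1.
Proof. by move=> c1; rewrite normfV c1 invr1. Qed.

Lemma norm1Xz (c : C) (k : int) : `|c| = 1 -> `|c ^ k| = 1.
Proof. by move=> c1; case: k => k; rewrite ?normfV normrX c1 expr1n ?invr1. Qed.

Lemma RtoCD (x y : R) : RtoC (x + y) = RtoC x + RtoC y. Proof. exact: rmorphD. Qed.
Lemma RtoCM (x y : R) : RtoC (x * y) = RtoC x * RtoC y. Proof. exact: rmorphM. Qed.
Lemma RtoC1 : RtoC 1 = 1. Proof. exact: rmorph1. Qed.
Lemma RtoC_conj (x : R) : (RtoC x)^* = RtoC x. Proof. exact: conjc_real. Qed.

Lemma RtoC_norm (r : R) : (0 <= r)%R -> `|RtoC r| = RtoC r.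
Proof. by move=> r_ge0; apply: ger0_norm; rewrite /RtoC lecR; apply/RleP. Qed.

Lemma RtoC_neq0 (r : R) : (0 < r)%R -> RtoC r != 0.
Proof.
move=> r_gt0; apply/eqP => /(congr1 (@complex.Re R)) /= r0.
by rewrite r0 -R0E in r_gt0; lra.
Qed.

Lemma norm1_mul_real (u : C) (r r' : R) : `|u| = 1 -> (0 < r)%R -> (0 < r')%R ->
  u * RtoC r = RtoC r' -> r = r' /\ u = 1.
Proof.
move=> u1 r_gt0 r'_gt0 eq_r.
have eq_rr' : r = r'.
  apply: complexI; change (RtoC r = RtoC r').
  rewrite -[RtoC r]RtoC_norm -1?[RtoC r']RtoC_norm; try lra.
  by rewrite -eq_r normrM u1 mul1r.
split=> //; apply: (mulIf (RtoC_neq0 r_gt0)).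
by rewrite mul1r eq_r eq_rr'.
Qed.

Lemma norm1_conj_mul_real (c x : C) (r r' : R) :
  `|c| = 1 -> `|x| = 1 -> (0 < r)%R -> (0 < r')%R ->
  c^* * x * RtoC r = RtoC r' -> r = r' /\ x = c.
Proof.
move=> c1 x1 r_gt0 r'_gt0 /norm1_mul_real [|//|//|-> cx1].
  by rewrite normrM norm_conjC c1 x1 mulr1.
by split=> //; rewrite -[x]mul1r -(norm1_mulCr c1) -mulrA cx1 mulr1.
Qed.

Lemma expiD (x y : R) : expi (x + y) = expi x * expi y.
Proof.
rewrite /expi /GRing.mul /=; congr (_ +i* _)%C; first by rewrite cosD.
by rewrite sinD addrC.
Qed.

Lemma expi0 : expi 0 = 1.
Proof. by rewrite /expi cos_0 sin_0. Qed.

Lemma cos2_sin2 (t : R) : cos t ^+ 2 + sin t ^+ 2 = 1.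
Proof. by rewrite !expr2 -!RmultE -RplusE -R1E; have := sin2_cos2 t; rewrite /Rsqr; lra. Qed.

Lemma norm_expi (t : R) : `|expi t| = 1.
Proof. by rewrite normc_def /= cos2_sin2 sqrtr1. Qed.

Lemma expi_onto (z : C) : `|z| = 1 -> exists t, expi t = z.
Proof.
case: z => a b; rewrite normc_def /= => /(congr1 (@complex.Re R)) /= ab1.
have {ab1} : (a * a + b * b = 1)%R.
  rewrite RmultE RplusE R1E -!expr2 -[LHS]sqr_sqrtr ?ab1 ?expr1n //.
  by rewrite addr_ge0 // sqr_ge0.
move=> ab1; have a_bound : (-1 <= a <= 1)%R by nra.
have sin_acos_a : sin (acos a) = Rabs b.
  by rewrite sin_acos // -sqrt_Rsqr_abs /Rsqr; congr sqrt; lra.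
have [b_ge0 | b_lt0] := Rle_lt_dec 0 b.
- exists (acos a); rewrite /expi cos_acos // sin_acos_a Rabs_pos_eq //.
- exists (- acos a)%R; rewrite /expi cos_neg sin_neg cos_acos // sin_acos_a.
  by rewrite Rabs_left // Ropp_involutive.
Qed.

Lemma expi_inj (x y : R) :
  (0 <= x < 2 * PI)%R -> (0 <= y < 2 * PI)%R -> expi x = expi y -> x = y.
Proof.
move=> x_range y_range [cos_xy sin_xy].
have cos_diff : cos (x - y) = 1%R.
  by rewrite cos_minus cos_xy sin_xy; have := sin2_cos2 y; rewrite /Rsqr; lra.
have [k diff_k] : exists k, (x - y = IZR k * PI)%R.
  by apply: sin_eq_0_0; rewrite sin_minus cos_xy sin_xy; lra.
have PI_gt0 := PI_RGT_0.
have k_range : (-2 < k < 2)%Z.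
  by split; apply: lt_IZR; apply: (Rmult_lt_reg_r PI) => //; rewrite -diff_k; lra.
have [k_odd | k0] : (k = -1 \/ k = 1)%Z \/ k = 0%Z by lia.
- have cos_kPI : cos (IZR k * PI) = (-1)%R.
    by case: k_odd => ->; rewrite ?Rmult_1_l -?Ropp_mult_distr_l ?Rmult_1_l ?cos_neg cos_PI.
  by move: cos_diff; rewrite diff_k cos_kPI; lra.
- by move: diff_k; rewrite k0 Rmult_0_l; lra.
Qed.

Lemma polarC (z : C) :
  exists (r : R) (P : C), (0 <= r)%R /\ `|P| = 1 /\ z = RtoC r * P /\ `|z| = RtoC r.
Proof.
have norm_real : `|z| = RtoC (complex.Re `|z|) by [].
exists (complex.Re `|z|).
have r_ge0 : (0 <= complex.Re `|z|)%R by apply/RleP; rewrite -lecR; exact: normr_ge0 z.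
have [z0 | z_neq0] := eqVneq z 0.
  exists 1; split=> //; rewrite normr1 mulr1 -norm_real z0 normr0.
  by split.
have nz_neq0 : `|z| != 0 by rewrite normr_eq0.
exists (z / `|z|); split=> //; rewrite normf_div normr_id divff // -norm_real.
by split; rewrite // mulrC divfK.
Qed.

Lemma sqrt1m_unique (r s : R) : (0 <= s)%R -> (r * r + s * s = 1)%R -> sqrt1m r = s.
Proof. by move=> s_ge0 rs1; rewrite /sqrt1m -[s]sqrt_square //; congr sqrt; lra. Qed.

Lemma sqrt1m_gt0 (r : R) : (0 < r < 1)%R -> (0 < sqrt1m r)%R.
Proof. by move=> r_range; apply: sqrt_lt_R0; nra. Qed.

Lemma norm_sqrt1m (r : R) : (0 <= r <= 1)%R -> `|RtoC r| ^+ 2 + `|RtoC (sqrt1m r)| ^+ 2 = 1.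
Proof.
move=> r_range; rewrite !RtoC_norm; [|exact: sqrt_pos|lra].
rewrite !expr2 -!RtoCM -RtoCD -RtoC1; congr RtoC.
have sq : (r * r + sqrt1m r * sqrt1m r = 1)%R by rewrite /sqrt1m sqrt_sqrt; nra.
exact: sq.
Qed.

(** * Orthonormal bases of C^2 *)

Lemma orthogonal_complement_C2 (p q u v : C) :
  p^* * p + q^* * q = 1 -> p^* * u + q^* * v = 0 -> u^* * u + v^* * v = 1 ->
  exists k : C, `|k| = 1 /\ u = - k * q^* /\ v = k * p^*.
Proof.
move=> pq1 pq_uv uv1; exists (p * v - q * u).
have u_eq : u = - (p * v - q * u) * q^*.
  apply/eqP; rewrite -subr_eq0; apply/eqP.
  transitivity (u * (1 - (p^* * p + q^* * q)) + p * (p^* * u + q^* * v)); first by ring.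
  by rewrite pq1 pq_uv; ring.
have v_eq : v = (p * v - q * u) * p^*.
  apply/eqP; rewrite -subr_eq0; apply/eqP.
  transitivity (v * (1 - (p^* * p + q^* * q)) + q * (p^* * u + q^* * v)); first by ring.
  by rewrite pq1 pq_uv; ring.
split=> //; move: (p * v - q * u) u_eq v_eq => k u_eq v_eq.
apply/eqP; rewrite -(sqrp_eq1 (normr_ge0 k)) normCK; apply/eqP.
rewrite -uv1 u_eq v_eq !rmorphM !rmorphN /= !conjCK -[LHS]mulr1 -pq1; ring.
Qed.

Definition frame_mx (c1 c2 : C) (x1 x2 : vec) : 'M[C]_2 :=
  \matrix_(i, j) (if i == ord0 then c1 * (x1 j ord0)^* else c2 * (x2 j ord0)^*).

Lemma frame_mxE (c1 c2 : C) (x1 x2 v : vec) :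
  frame_mx c1 c2 x1 x2 *m v = (c1 * inner x1 v) *: e1 + (c2 * inner x2 v) *: e2.
Proof. by apply: vec2P; rewrite ?comb_coord0 ?comb_coord1 mulmx2E !mxE innerE /=; ring. Qed.

Section Orthonormal.

Variables x1 x2 : vec.
Hypothesis x12 : orthonormal2 x1 x2.

Lemma inner_x21 : inner x2 x1 = 0.
Proof. by case: x12 => _ [_ x12_0]; rewrite innerC x12_0 conjC0. Qed.

Lemma frame_mx_x1 (c1 c2 : C) : frame_mx c1 c2 x1 x2 *m x1 = c1 *: e1.
Proof.
by case: x12 => x11 _; rewrite frame_mxE x11 inner_x21 mulr1 mulr0 scale0r addr0.
Qed.

Lemma frame_mx_x2 (c1 c2 : C) : frame_mx c1 c2 x1 x2 *m x2 = c2 *: e2.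
Proof.
by case: x12 => _ [x22 x12_0]; rewrite frame_mxE x22 x12_0 mulr1 mulr0 scale0r add0r.
Qed.

Lemma frame_mx_unitary (c1 c2 : C) : `|c1| = 1 -> `|c2| = 1 ->
  adjm (frame_mx c1 c2 x1 x2) *m frame_mx c1 c2 x1 x2 = 1%:M /\
  frame_mx c1 c2 x1 x2 *m adjm (frame_mx c1 c2 x1 x2) = 1%:M.
Proof.
move=> c1_1 c2_1; have x21 := inner_x21; case: x12 => x11 [x22 x12_0].
suff FF : frame_mx c1 c2 x1 x2 *m adjm (frame_mx c1 c2 x1 x2) = 1%:M.
  by split=> //; apply: mulmx1C.
move: x11 x22 x12_0 x21; rewrite !innerE => x11 x22 x12_0 x21.
apply: mx2P; rewrite mulmx2E !adjmE !mxE /= !rmorphM /= !conjCK.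
- by rewrite -[RHS](norm1_mulCr c1_1) -[RHS]mulr1 -x11; ring.
- by rewrite -[RHS](mulr0 (c1 * c2^*)) -x12_0; ring.
- by rewrite -[RHS](mulr0 (c2 * c1^*)) -x21; ring.
- by rewrite -[RHS](norm1_mulCr c2_1) -[RHS]mulr1 -x22; ring.
Qed.

Lemma inner_parseval (y z : vec) :
  inner y z = (inner x1 y)^* * inner x1 z + (inner x2 y)^* * inner x2 z.
Proof.
have [FF _] := frame_mx_unitary (normr1 C) (normr1 C).
by rewrite -(inner_isometry y z FF) !frame_mxE inner_comb !mul1r.
Qed.

Lemma orthonormal_polar (v : vec) : inner v v = 1 ->
  exists (r : R) (P Q : C), (0 <= r <= 1)%R /\ `|P| = 1 /\ `|Q| = 1 /\
    inner x1 v = RtoC r * P /\ inner x2 v = RtoC (sqrt1m r) * Q.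
Proof.
move=> v1; have [r [P [r_ge0 [P1 [x1v x1v_norm]]]]] := polarC (inner x1 v).
have [s [Q [s_ge0 [Q1 [x2v x2v_norm]]]]] := polarC (inner x2 v).
have rs1 : (r * r + s * s = 1)%R.
  rewrite RplusE !RmultE R1E; apply: complexI; change (RtoC (r * r + s * s) = RtoC 1).
  by rewrite RtoCD !RtoCM RtoC1 -x1v_norm -x2v_norm -!expr2 !normCKC -inner_parseval.
exists r, P, Q; rewrite (sqrt1m_unique s_ge0 rs1).
by do !split=> //; nra.
Qed.

Lemma orthonormal_pair_polar (z1 z2 : vec) : orthonormal2 z1 z2 ->
  exists (r : R) (P Q k : C),
    (0 <= r <= 1)%R /\ `|P| = 1 /\ `|Q| = 1 /\ `|k| = 1 /\
    inner x1 z1 = RtoC r * P /\ inner x2 z1 = RtoC (sqrt1m r) * Q /\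
    inner x1 z2 = - k * RtoC (sqrt1m r) * Q^-1 /\ inner x2 z2 = k * RtoC r * P^-1.
Proof.
move=> [z11 [z22 z12]].
have [r [P [Q [r_range [P1 [Q1 [x1z1 x2z1]]]]]]] := orthonormal_polar z11.
have [|||k [k1 [x1z2 x2z2]]] :=
  @orthogonal_complement_C2 (inner x1 z1) (inner x2 z1) (inner x1 z2) (inner x2 z2);
  [by rewrite -inner_parseval.. |].
exists r, P, Q, k; do 4!split=> //.
rewrite x1z2 x2z2 x1z1 x2z1 !rmorphM /= !RtoC_conj !norm1_conj //.
by do !split; rewrite ?mulrA.
Qed.

End Orthonormal.

(** * Nearest-neighbour kernels and site-wise gauge transformations *)

Definition walk_kernel (x1 x2 z1 z2 : int -> vec) : kernel := fun n m =>
  (if n == m - 1 then ketbra (x1 n) (z1 m) else 0)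
  + (if n == m + 1 then ketbra (x2 n) (z2 m) else 0).

Lemma two_phase_kernelE (xi1p xi2p xi1m xi2m ze1p ze2p ze1m ze2m : vec) :
  two_phase_kernel xi1p xi2p xi1m xi2m ze1p ze2p ze1m ze2m
  = walk_kernel (fun n => Defs.pick n xi1p xi1m) (fun n => Defs.pick n xi2p xi2m)
                (fun n => Defs.pick n ze1p ze1m) (fun n => Defs.pick n ze2p ze2m).
Proof. by []. Qed.

Lemma U_rsE (rp rm s1 s2 : R) :
  U_rs rp rm s1 s2 = walk_kernel (fun=> e1) (fun=> e2) (Uzeta1 rp rm s2) (Uzeta2 rp rm s1 s2).
Proof. by []. Qed.

Section WalkKernel.

Variables x1 x2 z1 z2 : int -> vec.

Lemma walk_kernel_lower (m : int) :
  walk_kernel x1 x2 z1 z2 (m - 1) m = ketbra (x1 (m - 1)) (z1 m).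
Proof. by rewrite /walk_kernel eqxx ifN ?addr0 //; lia. Qed.

Lemma walk_kernel_upper (m : int) :
  walk_kernel x1 x2 z1 z2 (m + 1) m = ketbra (x2 (m + 1)) (z2 m).
Proof. by rewrite /walk_kernel eqxx ifN ?add0r //; lia. Qed.

Lemma walk_kernel_far (n m : int) :
  n != m - 1 -> n != m + 1 -> walk_kernel x1 x2 z1 z2 n m = 0.
Proof. by move=> /negPf n_lo /negPf n_hi; rewrite /walk_kernel n_lo n_hi addr0. Qed.

End WalkKernel.

Lemma ketbra_gauge (rho a : C) (V1 V2 : 'M[C]_2) (x z e : vec) : V1 *m x = a *: e ->
  rho *: (V1 *m ketbra x z *m adjm V2) = ketbra e ((rho * a)^* *: (V2 *m z)).
Proof. by rewrite ketbra_conj => ->; rewrite scale_ketbra scalerA ketbraZl. Qed.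

Lemma ketbra_gauge_range (rho : C) (V1 V2 : 'M[C]_2) (x z x' z' : vec) :
  adjm V2 *m V2 = 1%:M -> inner z z = 1 ->
  rho *: (V1 *m ketbra x z *m adjm V2) = ketbra x' z' ->
  rho *: (V1 *m x) = inner z' (V2 *m z) *: x'.
Proof.
move=> V2V zz /(congr1 (mulmx^~ (V2 *m z))).
rewrite -!scalemxAl -mulmxA (mulmxA (adjm V2)) V2V mul1mx -mulmxA.
by rewrite !ketbra_apply zz scale1r.
Qed.

Lemma walk_kernel_gauge (x1 x2 z1 z2 y1 y2 : int -> vec) (W : int -> 'M[C]_2)
    (rho : C) (a b : int -> C) :
  (forall n, W n *m x1 n = a n *: e1) -> (forall n, W n *m x2 n = b n *: e2) ->
  (forall m, (rho * a (m - 1))^* *: (W m *m z1 m) = y1 m) ->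
  (forall m, (rho * b (m + 1))^* *: (W m *m z2 m) = y2 m) ->
  forall n m, rho *: (W n *m walk_kernel x1 x2 z1 z2 n m *m adjm (W m))
              = walk_kernel (fun=> e1) (fun=> e2) y1 y2 n m.
Proof.
move=> Wx1 Wx2 Wz1 Wz2 n m.
have [-> | n_lo] := eqVneq n (m - 1).
  by rewrite !walk_kernel_lower (ketbra_gauge _ _ _ (Wx1 _)) Wz1.
have [-> | n_hi] := eqVneq n (m + 1).
  by rewrite !walk_kernel_upper (ketbra_gauge _ _ _ (Wx2 _)) Wz2.
by rewrite !walk_kernel_far // mulmx0 mul0mx scaler0.
Qed.

Section GaugeBetweenStandardWalks.

Variables (z1 z2 y1 y2 : int -> vec) (W : int -> 'M[C]_2) (rho : C).
Hypothesis gauge : forall n m,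
  rho *: (W n *m walk_kernel (fun=> e1) (fun=> e2) z1 z2 n m *m adjm (W m))
  = walk_kernel (fun=> e1) (fun=> e2) y1 y2 n m.

Lemma walk_gauge_diagonal : rho != 0 -> (forall n, adjm (W n) *m W n = 1%:M) ->
  (forall m, inner (z1 m) (z1 m) = 1) -> (forall m, inner (z2 m) (z2 m) = 1) ->
  forall n, W n *m e1 = W n ord0 ord0 *: e1 /\ W n *m e2 = W n ord_max ord_max *: e2.
Proof.
move=> rho0 WW z1_1 z2_1 n; split.
- have := gauge (n + 1 - 1) (n + 1); rewrite !walk_kernel_lower addrK.
  by move=> /(ketbra_gauge_range (WW _) (z1_1 _)); apply: mulmx_e1_parallel.
- have := gauge (n - 1 + 1) (n - 1); rewrite !walk_kernel_upper subrK.
  by move=> /(ketbra_gauge_range (WW _) (z2_1 _)); apply: mulmx_e2_parallel.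
Qed.

Hypothesis W_diag :
  forall n, W n *m e1 = W n ord0 ord0 *: e1 /\ W n *m e2 = W n ord_max ord_max *: e2.

Lemma walk_gauge_lower (m : int) : (rho * W (m - 1) ord0 ord0)^* *: (W m *m z1 m) = y1 m.
Proof.
apply: (ketbra_inj orthonormal_e12.1); rewrite -(ketbra_gauge _ _ _ (W_diag _).1).
by have := gauge (m - 1) m; rewrite !walk_kernel_lower.
Qed.

Lemma walk_gauge_upper (m : int) :
  (rho * W (m + 1) ord_max ord_max)^* *: (W m *m z2 m) = y2 m.
Proof.
apply: (ketbra_inj orthonormal_e12.2.1); rewrite -(ketbra_gauge _ _ _ (W_diag _).2).
by have := gauge (m + 1) m; rewrite !walk_kernel_upper.
Qed.

End GaugeBetweenStandardWalks.

(** * Normal form of a complete two-phase walk *)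

Definition geom2 (mu nu : C) (n : int) : C := (if 0 <= n then mu else nu) ^ (n + 1).

Lemma geom2_rec (mu nu : C) (n : int) : mu != 0 -> nu != 0 ->
  geom2 mu nu n = (if 0 <= n then mu else nu) * geom2 mu nu (n - 1).
Proof.
move=> mu0 nu0; rewrite /geom2 subrK.
have [n0 | n_ne0] := eqVneq n 0.
  by rewrite n0 lexx add0r expr1z expr0z mulr1.
have -> : (0 <= n - 1) = (0 <= n) by lia.
by case: ifP => _; rewrite expfzDr ?expr1z 1?mulrC.
Qed.

Lemma norm1_geom2 (mu nu : C) (n : int) : `|mu| = 1 -> `|nu| = 1 -> `|geom2 mu nu n| = 1.
Proof. by move=> mu1 nu1; rewrite /geom2; case: ifP => _; apply: norm1Xz. Qed.

Lemma orthonormal2_pick (n : int) (x1 x2 y1 y2 : vec) :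
  orthonormal2 x1 x2 -> orthonormal2 y1 y2 -> orthonormal2 (Defs.pick n x1 y1) (Defs.pick n x2 y2).
Proof. by rewrite /Defs.pick; case: ifP. Qed.

Lemma inner_pick (n : int) (x y x' y' : vec) :
  inner (Defs.pick n x y) (Defs.pick n x' y') = if 0 <= n then inner x x' else inner y y'.
Proof. by rewrite /Defs.pick; case: ifP. Qed.

(* [kp], [km] and [Qm] are the phases of [orthonormal_pair_polar] on the two half-lines,
   rewritten in terms of [rho], [s1] and [s2].  The phases [a] and [b] are those forced by
   the lower blocks once [a (-1) = 1]; the upper blocks then match thanks to [kp_eq] and
   [km_eq]. *)
Section NormalFormGauge.

Variables (rp rm s1 s2 : R) (Pp Qp kp Pm Qm km rho : C).
Hypotheses (Pp1 : `|Pp| = 1) (Qp1 : `|Qp| = 1) (Pm1 : `|Pm| = 1) (rho1 : `|rho| = 1).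
Hypotheses (kp_eq : kp = expi s1 * (rho * rho)) (km_eq : km = rho * rho * expi s2)
  (Qm_eq : Qm = expi s2 * Qp).

Let a := geom2 (rho / Pp) (rho / Pm).
Let b (n : int) := rho * a (n - 1) / Qp.

Let norm1_a (n : int) : `|a n| = 1.
Proof. by apply: norm1_geom2; apply: norm1M => //; apply: norm1V. Qed.

Let norm1_b (n : int) : `|b n| = 1.
Proof. by rewrite /b !norm1M // norm1V. Qed.

Let a_rec (n : int) : a n = (if 0 <= n then rho / Pp else rho / Pm) * a (n - 1).
Proof. by apply: geom2_rec; apply: norm1_neq0; apply: norm1M => //; apply: norm1V. Qed.

Let a_neq0 (n : int) : a n != 0 := norm1_neq0 (norm1_a n).
Let nonzero := (norm1_neq0 rho1, norm1_neq0 Pp1, norm1_neq0 Qp1, norm1_neq0 Pm1,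
  norm1_neq0 (norm_expi s2), a_neq0).

Lemma normal_gauge_lower (m : int) :
  (rho * a (m - 1))^* *:
    ((a m * (if 0 <= m then RtoC rp * Pp else RtoC rm * Pm)) *: e1
     + (b m * (if 0 <= m then RtoC (sqrt1m rp) * Qp else RtoC (sqrt1m rm) * Qm)) *: e2)
  = Uzeta1 rp rm s2 m.
Proof.
rewrite (norm1_conj (norm1M rho1 (norm1_a _))) scale_comb [a m]a_rec /b /Uzeta1 Qm_eq.
by case: ifP => _; congr (_ *: e1 + _ *: e2); field; rewrite ?nonzero.
Qed.

Lemma normal_gauge_upper (m : int) :
  (rho * b (m + 1))^* *:
    ((a m * (if 0 <= m then - kp * RtoC (sqrt1m rp) * Qp^-1
                        else - km * RtoC (sqrt1m rm) * Qm^-1)) *: e1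
     + (b m * (if 0 <= m then kp * RtoC rp * Pp^-1 else km * RtoC rm * Pm^-1)) *: e2)
  = Uzeta2 rp rm s1 s2 m.
Proof.
rewrite (norm1_conj (norm1M rho1 (norm1_b _))) scale_comb /b addrK [a m]a_rec.
rewrite /Uzeta2 Qm_eq kp_eq km_eq.
by case: ifP => _; congr (_ *: e1 + _ *: e2); field; rewrite ?nonzero.
Qed.

End NormalFormGauge.

Lemma two_phase_gauge_normal_form (xi1p xi2p xi1m xi2m ze1p ze2p ze1m ze2m : vec) :
  orthonormal2 xi1p xi2p -> orthonormal2 xi1m xi2m ->
  orthonormal2 ze1p ze2p -> orthonormal2 ze1m ze2m ->
  exists (rp rm s1 s2 l : R) (W : int -> 'M[C]_2),
    (0 <= rp <= 1)%R /\ (0 <= rm <= 1)%R /\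
    (forall n, adjm (W n) *m W n = 1%:M /\ W n *m adjm (W n) = 1%:M) /\
    (forall n m, expi l *: (W n *m two_phase_kernel xi1p xi2p xi1m xi2m ze1p ze2p ze1m ze2m n m
                           *m adjm (W m)) = U_rs rp rm s1 s2 n m).
Proof.
move=> xi_p xi_m ze_p ze_m.
have [rp [Pp [Qp [kp [rp_range [Pp1 [Qp1 [kp1 [x11p [x21p [x12p x22p]]]]]]]]]]] :=
  orthonormal_pair_polar xi_p ze_p.
have [rm [Pm [Qm [km [rm_range [Pm1 [Qm1 [km1 [x11m [x21m [x12m x22m]]]]]]]]]]] :=
  orthonormal_pair_polar xi_m ze_m.
have [s2 es2] := expi_onto (norm1M Qm1 (norm1V Qp1)).
have [th eth] := expi_onto (norm1M km1 (norm1V (norm_expi s2))).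
pose rho := expi (th / 2).
have rho1 : `|rho| = 1 := norm_expi _.
have rho2 : rho * rho = km / expi s2 by rewrite -expiD -eth; congr expi; lra.
have [s1 es1] := expi_onto (norm1M kp1 (norm1V (norm1M rho1 rho1))).
have nonzero := (norm1_neq0 Qp1, norm1_neq0 (norm_expi s2), norm1_neq0 rho1).
have kp_eq : kp = expi s1 * (rho * rho) by rewrite es1; field; rewrite ?nonzero.
have km_eq : km = rho * rho * expi s2 by rewrite rho2; field; rewrite ?nonzero.
have Qm_eq : Qm = expi s2 * Qp by rewrite es2; field; rewrite ?nonzero.
pose a := geom2 (rho / Pp) (rho / Pm).
pose b n := rho * a (n - 1) / Qp.
have norm1_a n : `|a n| = 1 by apply: norm1_geom2; apply: norm1M rho1 (norm1V _).
pose W n := frame_mx (a n) (b n) (Defs.pick n xi1p xi1m) (Defs.pick n xi2p xi2m).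
have xi_n n := orthonormal2_pick n xi_p xi_m.
exists rp, rm, s1, s2, (th / 2)%R, W; do 2 split=> //; split.
  by move=> n; apply: (frame_mx_unitary (xi_n n)) => //; rewrite /b !norm1M ?norm1V.
move=> n m; rewrite two_phase_kernelE U_rsE.
apply: (walk_kernel_gauge (W := W) (a := a) (b := b)) => {n m} n.
- exact: (frame_mx_x1 (xi_n n)).
- exact: (frame_mx_x2 (xi_n n)).
- rewrite frame_mxE !inner_pick x11p x21p x11m x21m.
  exact (normal_gauge_lower _ _ Pp1 Qp1 Pm1 rho1 Qm_eq n).
- rewrite frame_mxE !inner_pick x12p x22p x12m x22m.
  exact (normal_gauge_upper _ _ Pp1 Qp1 Pm1 rho1 kp_eq km_eq Qm_eq n).
Qed.

Lemma unit_vector_normal_form (v : vec) : inner v v = 1 ->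
  exists (a l t : R), (0 <= a <= 1)%R /\ expi l *: v = Phi_at a t.
Proof.
move=> v1; have [a [P [Q [a_range [P1 [Q1 [e1v e2v]]]]]]] := orthonormal_polar orthonormal_e12 v1.
have [l el] := expi_onto (norm1V P1).
have [t et] := expi_onto (norm1M (norm1V P1) Q1).
exists a, l, t; split=> //.
have nonzero := (norm1_neq0 P1, norm1_neq0 Q1).
rewrite [v]vec_comb -inner_e1l -inner_e2l e1v e2v /Phi_at scale_comb et el.
by congr (_ *: e1 + _ *: e2); field; rewrite ?nonzero.
Qed.

(** * Uniqueness of the parameters *)

Lemma inner_comb_self (c d : C) : inner (c *: e1 + d *: e2) (c *: e1 + d *: e2) = `|c| ^+ 2 + `|d| ^+ 2.
Proof. by rewrite inner_comb !normCKC. Qed.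

Lemma inner_Uzeta1 (rp rm s2 : R) (m : int) : (0 <= rp <= 1)%R -> (0 <= rm <= 1)%R ->
  inner (Uzeta1 rp rm s2 m) (Uzeta1 rp rm s2 m) = 1.
Proof.
move=> rp_range rm_range; rewrite /Uzeta1.
by case: ifP => _; rewrite inner_comb_self ?normrM ?norm_expi ?mul1r norm_sqrt1m.
Qed.

Lemma inner_Uzeta2 (rp rm s1 s2 : R) (m : int) : (0 <= rp <= 1)%R -> (0 <= rm <= 1)%R ->
  inner (Uzeta2 rp rm s1 s2 m) (Uzeta2 rp rm s1 s2 m) = 1.
Proof.
move=> rp_range rm_range; rewrite /Uzeta2.
by case: ifP => _; rewrite inner_comb_self normrN !normrM norm_expi !mul1r addrC norm_sqrt1m.
Qed.

Section GaugeBetweenNormalForms.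

Variables (rp rm s1 s2 rp' rm' s1' s2' : R) (rho : C) (W : int -> 'M[C]_2).
Hypotheses (rp_range : (0 < rp < 1)%R) (rm_range : (0 < rm < 1)%R)
  (rp'_range : (0 < rp' < 1)%R) (rm'_range : (0 < rm' < 1)%R).
Hypotheses (rho1 : `|rho| = 1) (WW : forall n, adjm (W n) *m W n = 1%:M).
Hypothesis gauge :
  forall n m, rho *: (W n *m U_rs rp rm s1 s2 n m *m adjm (W m)) = U_rs rp' rm' s1' s2' n m.

Let W_diag (n : int) : W n *m e1 = W n ord0 ord0 *: e1 /\ W n *m e2 = W n ord_max ord_max *: e2.
Proof.
have [rp_le1 rm_le1] : (0 <= rp <= 1)%R /\ (0 <= rm <= 1)%R by lra.
apply: (walk_gauge_diagonal gauge (norm1_neq0 rho1) WW).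
- by move=> m; apply: inner_Uzeta1.
- by move=> m; apply: inner_Uzeta2.
Qed.

Let norm1_W00 (n : int) : `|W n ord0 ord0| = 1.
Proof. exact: isometry_eigenvalue_norm1 (WW n) orthonormal_e12.1 (W_diag n).1. Qed.

Let norm1_W11 (n : int) : `|W n ord_max ord_max| = 1.
Proof. exact: isometry_eigenvalue_norm1 (WW n) orthonormal_e12.2.1 (W_diag n).2. Qed.

Let gauge_lower (m : int) :
  (rho * W (m - 1) ord0 ord0)^* *: (W m *m Uzeta1 rp rm s2 m) = Uzeta1 rp' rm' s2' m.
Proof. exact: (walk_gauge_lower gauge W_diag). Qed.

Let gauge_upper (m : int) :
  (rho * W (m + 1) ord_max ord_max)^* *: (W m *m Uzeta2 rp rm s1 s2 m) = Uzeta2 rp' rm' s1' s2' m.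
Proof. exact: (walk_gauge_upper gauge W_diag). Qed.

(* The six blocks around the origin already determine all the parameters. *)
Lemma U_rs_gauge_rigid :
  [/\ rp = rp', rm = rm', expi s1 = expi s1', expi s2 = expi s2'
    & forall v : vec, W 0 *m v = W 0 ord0 ord0 *: v].
Proof.
suff [-> -> -> -> b0_eq] : [/\ rp = rp', rm = rm', expi s1 = expi s1', expi s2 = expi s2'
    & W 0 ord_max ord_max = W 0 ord0 ord0].
  by split=> // v; rewrite [v]vec_comb (mulmx_diag_comb _ _ (W_diag 0).1 (W_diag 0).2) scale_comb b0_eq.
have coords := mulmx_diag_combP (W_diag _).1 (W_diag _).2.
have := gauge_lower 0; rewrite /Uzeta1 /= => /coords [L0a L0b].
have := gauge_lower 1; rewrite /Uzeta1 /= => /coords [_ L1b].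
have := gauge_lower (-1); rewrite /Uzeta1 /= => /coords [Lm1a Lm1b].
have := gauge_upper 0; rewrite /Uzeta2 /= => /coords [_ U0b].
have := gauge_upper (-1); rewrite /Uzeta2 /= => /coords [+ _]; rewrite mulrN => /oppr_inj Um1a.
have := gauge_upper (-2); rewrite /Uzeta2 /= => /coords [+ _]; rewrite mulrN => /oppr_inj Um2a.
set a0 := W 0 ord0 ord0 in L0a L1b U0b *.
set am1 := W (-1) ord0 ord0 in L0a L0b Lm1a Um1a.
set am2 := W (-2) ord0 ord0 in Lm1a Lm1b Um2a.
set b0 := W 0 ord_max ord_max in L0b U0b Um1a *.
set b1 := W 1 ord_max ord_max in L1b U0b.
set bm1 := W (-1) ord_max ord_max in Lm1b Um2a.
have [a0_1 am1_1 am2_1] : [/\ `|a0| = 1, `|am1| = 1 & `|am2| = 1] by split; apply: norm1_W00.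
have [b0_1 b1_1 bm1_1] : [/\ `|b0| = 1, `|b1| = 1 & `|bm1| = 1] by split; apply: norm1_W11.
clearbody a0 am1 am2 b0 b1 bm1.
have [sp_gt0 sm_gt0] := conj (sqrt1m_gt0 rp_range) (sqrt1m_gt0 rm_range).
have [sp'_gt0 sm'_gt0] := conj (sqrt1m_gt0 rp'_range) (sqrt1m_gt0 rm'_range).
have [rp_eq a0_eq] := norm1_conj_mul_real (norm1M rho1 am1_1) a0_1 (proj1 rp_range) (proj1 rp'_range) L0a.
have [_ b0_eq] := norm1_conj_mul_real (norm1M rho1 am1_1) b0_1 sp_gt0 sp'_gt0 L0b.
have [_ b1_eq] := norm1_conj_mul_real (norm1M rho1 a0_1) b1_1 sp_gt0 sp'_gt0 L1b.
have [rm_eq am1_eq] := norm1_conj_mul_real (norm1M rho1 am2_1) am1_1 (proj1 rm_range) (proj1 rm'_range) Lm1a.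
have [_ am1_eq'] := norm1_conj_mul_real (norm1M rho1 b0_1) am1_1 sm_gt0 sm'_gt0 Um1a.
have [_ am2_eq] := norm1_conj_mul_real (norm1M rho1 bm1_1) am2_1 sm_gt0 sm'_gt0 Um2a.
subst rp' rm'.
have rho2 : rho * rho = 1.
  by apply: (mulIf (norm1_neq0 am1_1)); rewrite -mulrA -b0_eq -am1_eq' mul1r.
rewrite b1_eq [rho * (rho * _)]mulrA rho2 mul1r b0_eq -a0_eq norm1_mulCl // mul1r in U0b.
rewrite am2_eq [rho * (rho * _)]mulrA rho2 mul1r norm1_mulCl // mul1r in Lm1b.
split=> //; last by rewrite b0_eq.
- exact: (mulIf (RtoC_neq0 (proj1 rp_range))).
- exact: (mulIf (RtoC_neq0 sm_gt0)).
Qed.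

End GaugeBetweenNormalForms.


Lemma Phi_at_phase_inj (u : C) (a t a' t' : R) : `|u| = 1 ->
  (0 < a < 1)%R -> (0 < a' < 1)%R -> (0 <= t < 2 * PI)%R -> (0 <= t' < 2 * PI)%R ->
  u *: Phi_at a t = Phi_at a' t' -> a = a' /\ t = t'.
Proof.
move=> u1 a_range a'_range t_range t'_range; rewrite /Phi_at scale_comb => /combP [ua ut].
have [a_eq u_eq] := norm1_mul_real u1 (proj1 a_range) (proj1 a'_range) ua.
subst a' u; split=> //; apply: expi_inj => //.
by apply: (mulIf (RtoC_neq0 (sqrt1m_gt0 a_range))); rewrite -ut mul1r.
Qed.

Lemma U_rs_equiv_params (rp rm s1 s2 a t rp' rm' s1' s2' a' t' : R) :
  (0 < rp < 1)%R -> (0 < rm < 1)%R -> (0 < rp' < 1)%R -> (0 < rm' < 1)%R ->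
  (0 < a < 1)%R -> (0 < a' < 1)%R ->
  (0 <= s1 < 2 * PI)%R -> (0 <= s2 < 2 * PI)%R -> (0 <= t < 2 * PI)%R ->
  (0 <= s1' < 2 * PI)%R -> (0 <= s2' < 2 * PI)%R -> (0 <= t' < 2 * PI)%R ->
  unitary_equiv (U_rs rp rm s1 s2) (Phi_at a t) (U_rs rp' rm' s1' s2') (Phi_at a' t') ->
  rp = rp' /\ rm = rm' /\ s1 = s1' /\ s2 = s2' /\ a = a' /\ t = t'.
Proof.
move=> rp_range rm_range rp'_range rm'_range a_range a'_range s1_range s2_range t_range.
move=> s1'_range s2'_range t'_range [l [l' [W [WW [gauge Phi_eq]]]]].
have [-> -> s1_eq s2_eq W0_scalar] :=
  U_rs_gauge_rigid rp_range rm_range rp'_range rm'_range (norm_expi l) (fun n => (WW n).1) gauge.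
have W0_1 : `|W 0 ord0 ord0| = 1 :=
  isometry_eigenvalue_norm1 (WW 0).1 orthonormal_e12.1 (W0_scalar e1).
rewrite W0_scalar scalerA in Phi_eq.
have [-> ->] := Phi_at_phase_inj (norm1M (norm_expi l') W0_1) a_range a'_range t_range t'_range Phi_eq.
by rewrite (expi_inj s1_range s1'_range s1_eq) (expi_inj s2_range s2'_range s2_eq).
Qed.

Lemma unitary_equiv_refl (U : kernel) (Phi : vec) : unitary_equiv U Phi U Phi.
Proof.
exists 0%R, 0%R, (fun=> 1%:M); rewrite expi0 adjm1; split; first by move=> n; rewrite mul1mx.
by split; [move=> n m; rewrite mulmx1 mul1mx scale1r | rewrite mul1mx scale1r].
Qed.

Local Close Scope ring_scope.

Theorem theorem3p5 :
  (forall (U : kernel) (Phi : vec),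
     complete_two_phase U -> initial_state Phi ->
     exists rp rm a s1 s2 t : R,
       (0 <= rp <= 1)%R /\ (0 <= rm <= 1)%R /\ (0 <= a <= 1)%R /\
       unitary_equiv U Phi (U_rs rp rm s1 s2) (Phi_at a t))
  /\
  (forall rp rm s1 s2 a t rp' rm' s1' s2' a' t' : R,
     (0 < rp < 1)%R -> (0 < rm < 1)%R -> (0 < rp' < 1)%R -> (0 < rm' < 1)%R ->
     (0 < a < 1)%R -> (0 < a' < 1)%R ->
     (0 <= s1 < 2 * PI)%R -> (0 <= s2 < 2 * PI)%R -> (0 <= t < 2 * PI)%R ->
     (0 <= s1' < 2 * PI)%R -> (0 <= s2' < 2 * PI)%R -> (0 <= t' < 2 * PI)%R ->
     (unitary_equiv (U_rs rp rm s1 s2) (Phi_at a t) (U_rs rp' rm' s1' s2') (Phi_at a' t')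
      <-> rp = rp' /\ rm = rm' /\ s1 = s1' /\ s2 = s2' /\ a = a' /\ t = t')).
Proof.
split.
- move=> U Phi [_ [xi1p [xi2p [xi1m [xi2m [ze1p [ze2p [ze1m [ze2m]]]]]]]]].
  move=> [xi_p [xi_m [ze_p [ze_m U_eq]]]] Phi1.
  have [rp [rm [s1 [s2 [l [W [rp_range [rm_range [WW gauge]]]]]]]]] :=
    two_phase_gauge_normal_form xi_p xi_m ze_p ze_m.
  have [a [l' [t [a_range Phi_eq]]]] := unit_vector_normal_form (v := mulmx (W 0) Phi)
    (eq_trans (inner_isometry Phi Phi (WW 0).1) Phi1).
  exists rp, rm, a, s1, s2, t; do 3 split=> //.
  by exists l, l', W; do 2 split=> //; move=> n m; rewrite U_eq.
- move=> rp rm s1 s2 a t rp' rm' s1' s2' a' t' *; split; first exact: U_rs_equiv_params.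
  by case=> -> [-> [-> [-> [-> ->]]]]; apply: unitary_equiv_refl.
Qed.
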